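(* As Laurent series in $z$, $$\sum_{n\ge0}\binom{2n}{n}z^n=\left(9\frac{1+z}{1-z}+3\right)\Psi(-z)-(4z+8)\Psi^3(-z)-\left(12z^2+12z+3\right)\Psi^5(-z)\quad\text{modulo }27.$$
   Context: $\Psi(z)=\prod_{j\ge0}(1+z^{3^j})$, so $\Psi(-z)=\prod_{j\ge0}(1-z^{3^j})$. Rational functions are expanded as power series in $z$; ''modulo $27$'' means coefficientwise congruence. *)

From mathcomp Require Import all_boot all_order all_algebra.
Set Implicit Arguments. Unset Strict Implicit. Unset Printing Implicit Defensive.
Import GRing.Theory.
Local Open Scope ring_scope.

Definition series := nat -> int.

Definition sconst (c : int) : series := fun n => if n == 0%N then c else 0.
Definition spoly (p : {poly int}) : series := fun n => p`_n.
Definition sadd (f g : series) : series := fun n => f n + g n.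
Definition ssub (f g : series) : series := fun n => f n - g n.
Definition sscale (c : int) (f : series) : series := fun n => c * f n.
Definition smul (f g : series) : series :=
  fun n => \sum_(i < n.+1) f i * g (n - i)%N.
Definition spow (f : series) (k : nat) : series := iter k (smul f) (sconst 1).

(* 1/(1-z) = sum_{n>=0} z^n *)
Definition sgeom : series := fun _ => 1.

(* Psi(-z) = prod_{j>=0} (1 - z^(3^j)); the coefficient of z^n only depends on
   the factors with 3^j <= n, all of which occur among j < n+1. *)
Definition Psi_neg : series :=
  fun n => (\prod_(j < n.+1) (1 - 'X^(3 ^ j)) : {poly int})`_n.

Definition central_binom : series := fun n => ('C(n.*2, n))%:Z.

Definition rhs12 : series :=
  ssub (ssub
    (smul (sadd (sscale 9 (smul (spoly (1 + 'X)) sgeom)) (sconst 3)) Psi_neg)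
    (smul (spoly (4 *: 'X + 8%:P)) (spow Psi_neg 3)))
    (smul (spoly (12 *: 'X^2 + 12 *: 'X + 3%:P)) (spow Psi_neg 5)).

(* With C(z) = sum binom(2n,n) z^n, P = Psi(-z), G = 1/(1-z) and R(z) the
   right-hand side, both C and R have constant term 1, and modulo 27 both are
   square roots of 1/(1-4z):
   - (1-4z) C^2 = 1 over int, from the equation (1-4z) C' = 2 C;
   - (1-z) P^2 = 1 + 3e for an integral series e, as (1-y)^3 = 1 - y^3 mod 3
     telescopes through the product defining Psi;
   - substituting G and P gives (1-z)^5 R^2 = (1+3e) num^2 for an explicit
     num, and (1-4z)(1+3e) num^2 = (1-z)^5 identically modulo 27.
   Two solutions of (1-4z) A^2 = 1 whose sum has a unit constant term agree,
   since (1-4z)(A-B)(A+B) = 0.  Series are handled through their truncations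
   to degree N: [teq N p q] (agreement up to degree N) is a congruence for the
   ring operations, and [tpoly] pushes an integer series into any ring. *)

From mathcomp Require Import all_boot all_order all_algebra.
From mathcomp Require Import ring zify.
Set Implicit Arguments. Unset Strict Implicit. Unset Printing Implicit Defensive.
Import GRing.Theory.
Local Open Scope ring_scope.

Section Truncation.
Context {R : comNzRingType}.
Implicit Types (N : nat) (p q : {poly R}).

Definition vanish N p := forall k, (k <= N)%N -> p`_k = 0.
Definition teq N p q := vanish N (p - q).

Lemma vanish0 N : vanish N 0.
Proof. by move=> k _; rewrite coef0. Qed.

Lemma vanishD N p q : vanish N p -> vanish N q -> vanish N (p + q).
Proof. by move=> hp hq k hk; rewrite coefD hp // hq // addr0. Qed.

Lemma vanishN N p : vanish N p -> vanish N (- p).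
Proof. by move=> hp k hk; rewrite coefN hp // oppr0. Qed.

Lemma vanishMl N p q : vanish N p -> vanish N (q * p).
Proof.
move=> hp k hk; rewrite coefM big1 // => i _.
by rewrite hp ?mulr0 // (leq_trans (leq_subr _ _) hk).
Qed.

Lemma vanishXn N m : (N < m)%N -> vanish N 'X^m.
Proof. by move=> hm k hk; rewrite coefXn ltn_eqF // (leq_ltn_trans hk hm). Qed.

Lemma teq_refl N p : teq N p p.
Proof. by rewrite /teq subrr; apply: vanish0. Qed.

Lemma teq_eq N p q : p = q -> teq N p q.
Proof. by move=> ->; apply: teq_refl. Qed.

Lemma teq_trans N p q r : teq N p q -> teq N q r -> teq N p r.
Proof. by move=> h1 h2; have := vanishD h1 h2; rewrite /teq addrA subrK. Qed.

Lemma teq_add N p q p' q' : teq N p p' -> teq N q q' -> teq N (p + q) (p' + q').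
Proof.
move=> h1 h2; have := vanishD h1 h2.
by rewrite /teq; have -> : p + q - (p' + q') = p - p' + (q - q') by ring.
Qed.

Lemma teq_opp N p p' : teq N p p' -> teq N (- p) (- p').
Proof. by move=> /vanishN; rewrite /teq opprB opprK addrC. Qed.

Lemma teq_sub N p q p' q' : teq N p p' -> teq N q q' -> teq N (p - q) (p' - q').
Proof. by move=> h1 h2; apply: teq_add h1 (teq_opp h2). Qed.

Lemma teq_mul N p q p' q' : teq N p p' -> teq N q q' -> teq N (p * q) (p' * q').
Proof.
move=> h1 h2; have := vanishD (vanishMl q h1) (vanishMl p' h2).
by rewrite /teq; have -> : p * q - p' * q' = q * (p - p') + p' * (q - q') by ring.
Qed.

Lemma teq_exp N p p' k : teq N p p' -> teq N (p ^+ k) (p' ^+ k).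
Proof.
move=> h; elim: k => [|k IH]; first exact: teq_refl.
by rewrite !exprS; apply: teq_mul.
Qed.

End Truncation.

Ltac teq_congr :=
  repeat first [ assumption | apply: teq_refl | apply: teq_add | apply: teq_opp
               | apply: teq_mul | apply: teq_exp ].

(* A polynomial with invertible constant term is not a zero divisor modulo
   X^(N+1): the coefficients of d are recovered one by one. *)
Lemma vanish_cancel (R : comUnitRingType) N (u d : {poly R}) :
  u`_0 \is a GRing.unit -> vanish N (u * d) -> vanish N d.
Proof.
move=> hu hud; elim/ltn_ind=> k IH hk.
apply: (mulrI hu); rewrite mulr0 -[RHS](hud k hk) coefM big_ord_recl subn0.
rewrite big1 ?addr0 // => i _.
rewrite lift0; have := ltn_ord i => lt_ik.
by rewrite IH ?mulr0 //; lia.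
Qed.

Lemma teq_cancel (R : comUnitRingType) N (u p q : {poly R}) :
  u`_0 \is a GRing.unit -> teq N (u * p) (u * q) -> teq N p q.
Proof. by move=> hu; rewrite /teq -mulrBr; apply: vanish_cancel. Qed.

Lemma teq_sqrt_unique (R : comUnitRingType) N (a A B : {poly R}) :
  a`_0 \is a GRing.unit -> (A + B)`_0 \is a GRing.unit ->
  teq N (a * A ^+ 2) 1 -> teq N (a * B ^+ 2) 1 -> teq N A B.
Proof.
move=> ha hAB hA hB; apply: (vanish_cancel hAB); apply: (vanish_cancel ha).
have := teq_sub hA hB; rewrite /teq subrr subr0.
by have -> : a * A ^+ 2 - a * B ^+ 2 = a * ((A + B) * (A - B)) by ring.
Qed.

Lemma Zp_intr_eqmod p (a b : int) :
  (1 < p)%N -> (a%:~R : 'Z_p) = b%:~R -> (a = b %[mod p])%Z.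
Proof.
move=> p_gt1 hab; apply/eqP; rewrite eqz_mod_dvd.
have nat_case m : (m%:R : 'Z_p) = 0 -> (p %| m)%N.
  by move/(congr1 val) => /=; rewrite val_Zp_nat // => /eqP.
have : ((a - b)%:~R : 'Z_p) = 0 by rewrite rmorphB /= hab subrr.
case: (a - b) => n; rewrite dvdzE /=; first by rewrite -pmulrn; apply: nat_case.
by move/eqP; rewrite NegzE mulrNz oppr_eq0 -pmulrn => /eqP; apply: nat_case.
Qed.

Section SeriesImage.
Context {R : comNzRingType}.
Implicit Types (N : nat) (f g : series).

Definition tpoly N f : {poly R} := \poly_(i < N.+1) (f i)%:~R.

Lemma tpoly_coef N f k : (k <= N)%N -> (tpoly N f)`_k = (f k)%:~R.
Proof. by move=> hk; rewrite coef_poly ltnS hk. Qed.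

Lemma tpoly_sadd N f g : tpoly N (sadd f g) = tpoly N f + tpoly N g.
Proof. by apply/polyP=> k; rewrite coefD !coef_poly; case: ltnP; rewrite ?rmorphD ?addr0. Qed.

Lemma tpoly_ssub N f g : tpoly N (ssub f g) = tpoly N f - tpoly N g.
Proof. by apply/polyP=> k; rewrite coefB !coef_poly; case: ltnP; rewrite ?rmorphB ?subr0. Qed.

Lemma tpoly_sscale N c f : tpoly N (sscale c f) = (c%:~R)%:P * tpoly N f.
Proof. by apply/polyP=> k; rewrite coefCM !coef_poly; case: ltnP; rewrite ?rmorphM ?mulr0. Qed.

Lemma tpoly_sconst N c : tpoly N (sconst c) = (c%:~R)%:P.
Proof.
apply/polyP=> k; rewrite coefC coef_poly /sconst.
by case: k => [|k]; rewrite //= mulr0z if_same.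
Qed.

Lemma tpoly_spoly N p : teq N (tpoly N (spoly p)) (map_poly intr p).
Proof. by move=> k hk; rewrite coefB coef_map tpoly_coef // subrr. Qed.

Lemma tpoly_smul N f g : teq N (tpoly N (smul f g)) (tpoly N f * tpoly N g).
Proof.
move=> k hk; apply/eqP; rewrite coefB coefM tpoly_coef // rmorph_sum subr_eq0; apply/eqP.
apply: eq_bigr => i _; have := ltn_ord i; rewrite rmorphM /= => lt_ik.
by rewrite !tpoly_coef //; lia.
Qed.

Lemma tpoly_spow N f k : teq N (tpoly N (spow f k)) (tpoly N f ^+ k).
Proof.
elim: k => [|k IH]; first by rewrite /spow /= tpoly_sconst rmorph1; exact: teq_refl.
rewrite exprS /spow iterS -/(spow f k).
by apply: teq_trans (tpoly_smul _ _) _; apply: teq_mul => //; apply: teq_refl.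
Qed.

End SeriesImage.

Lemma vanish_map (R S : comNzRingType) (h : {rmorphism R -> S}) N (p : {poly R}) :
  vanish N p -> vanish N (map_poly h p).
Proof. by move=> hp k hk; rewrite coef_map /= hp // rmorph0. Qed.

Lemma tpoly_int (R : comNzRingType) N f :
  map_poly intr (tpoly N f : {poly int}) = tpoly N f :> {poly R}.
Proof. by apply/polyP=> k; rewrite coef_map !coef_poly; case: ltnP; rewrite ?intz ?rmorph0. Qed.

(* (m+1) binom(2m+2,m+1) = (4m+2) binom(2m,m): the recurrence behind the
   differential equation (1-4z) C' = 2 C. *)
Lemma binom_rec m : (m.+1 * 'C(m.+1.*2, m.+1) = 'C(m.*2, m) * (4 * m + 2))%N.
Proof.
have h1 := mul_bin_diag m.*2.+2 m.
have h2 := mul_bin_diag m.*2.+1 m.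
have e : 'C(m.*2.+1, m.+1) = 'C(m.*2.+1, m).
  have := @bin_sub m.*2.+1 m ltac:(lia).
  by rewrite (_ : (m.*2.+1 - m = m.+1)%N) //; lia.
rewrite e /= in h2; rewrite /= in h1.
have -> : m.+1.*2 = m.*2.+2 by lia.
nia.
Qed.

Section CentralBinomial.
Variable N : nat.
Let c : {poly int} := tpoly N central_binom.

Lemma cbinom_coef k : (k <= N)%N -> c`_k = 'C(k.*2, k).
Proof. by move=> hk; rewrite tpoly_coef // intz. Qed.

(* The defect of the differential equation (1-4z) C' = 2 C for the truncated
   series; it vanishes below degree N. *)
Definition cbinom_defect := c^`() - 'X * c^`() *+ 4 - c *+ 2.

Lemma cbinom_defect_coef k : (k < N)%N -> cbinom_defect`_k = 0.
Proof.
move=> hk; rewrite /cbinom_defect !coefB coefMn coefXM coefMn coef_deriv.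
case: k hk => [|k] hk /=; first by rewrite !cbinom_coef //; lia.
rewrite coef_deriv !cbinom_coef; try lia.
by have := binom_rec k.+1; lia.
Qed.

(* (1-4z) C^2 = 1 up to degree N: its derivative is 2 C times the defect. *)
Lemma cbinom_sq : vanish N ((1 - 4%:R * 'X) * c ^+ 2 - 1).
Proof.
set D := (1 - 4%:R * 'X) * c ^+ 2.
have dD : D^`() = (c * cbinom_defect) *+ 2.
  rewrite /D /cbinom_defect derivM derivB derivM derivX expr2 derivM.
  by rewrite -polyC1 -polyC_natr !derivC; ring.
case=> [|k] hk; rewrite coefB coef1 /=.
  by rewrite -horner_coef0 !hornerE horner_coef0 cbinom_coef // expr1n mulr1 subr0 subrr.
have low : (c * cbinom_defect)`_k = 0.
  rewrite coefM big1 // => i _.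
  by rewrite cbinom_defect_coef ?mulr0 //; have := ltn_ord i; lia.
have := congr1 (fun p : {poly int} => p`_k) dD.
rewrite /= coef_deriv coefMn low mul0rn subr0 => /eqP.
by rewrite Num.Theory.mulrn_eq0 => /eqP.
Qed.
End CentralBinomial.

Definition psi_partial J : {poly int} := \prod_(j < J) (1 - 'X^(3 ^ j)).

Lemma psi_partialS J : psi_partial J.+1 = psi_partial J * (1 - 'X^(3 ^ J)).
Proof. by rewrite /psi_partial big_ord_recr. Qed.

(* (1-z) Q_J^2 = 1 - z^(3^J) modulo 3, since (1-y)^3 = 1 - y^3 modulo 3. *)
Lemma psi_partial_sq J :
  exists E : {poly int}, (1 - 'X) * psi_partial J ^+ 2 = 1 - 'X^(3 ^ J) + 3%:R * E.
Proof.
elim: J => [|J [E IH]].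
  by exists 0; rewrite /psi_partial big_ord0 expn0 expr1n mulr1 mulr0 addr0.
exists ('X^(3 ^ J) ^+ 2 - 'X^(3 ^ J) + E * (1 - 'X^(3 ^ J)) ^+ 2).
rewrite psi_partialS expnS mulnC exprM; move: IH; move: 'X^(3 ^ J) => y IH.
have -> : (1 - 'X) * (psi_partial J * (1 - y)) ^+ 2 =
          ((1 - 'X) * psi_partial J ^+ 2) * (1 - y) ^+ 2 by ring.
by rewrite IH; ring.
Qed.

Lemma psi_partial_stable k J : (k < J)%N -> (psi_partial J)`_k = Psi_neg k.
Proof.
elim: J => [//|J IH]; rewrite ltnS leq_eqVlt => /orP [/eqP -> //|lt_kJ].
have lt_k3J : (k < 3 ^ J)%N by apply: leq_trans lt_kJ (ltnW (ltn_expl J (isT : 1 < 3)%N)).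
by rewrite psi_partialS mulrBr mulr1 coefB coefMXn lt_k3J subr0 IH.
Qed.

Lemma Psi_neg_sq (R : comNzRingType) N :
  exists e : {poly R}, teq N ((1 - 'X) * tpoly N Psi_neg ^+ 2) (1 + 3%:R * e).
Proof.
have [E hE] := psi_partial_sq N.+1.
exists (map_poly intr E).
have hP : teq N (tpoly N Psi_neg : {poly R}) (map_poly intr (psi_partial N.+1)).
  by move=> k hk; rewrite coefB coef_map /= tpoly_coef // psi_partial_stable // subrr.
apply: teq_trans (teq_mul (teq_refl _) (teq_exp 2 hP)) _.
have -> : (1 - 'X) * map_poly intr (psi_partial N.+1) ^+ 2 =
          map_poly intr ((1 - 'X) * psi_partial N.+1 ^+ 2) :> {poly R}.
  by rewrite rmorphM rmorphB rmorph1 /= map_polyX rmorphXn.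
rewrite hE rmorphD rmorphB rmorph1 /= map_polyXn rmorphM rmorph_nat /teq.
have -> : 1 - 'X^(3 ^ N.+1) + 3%:R * map_poly intr E - (1 + 3%:R * map_poly intr E) =
          - 'X^(3 ^ N.+1) :> {poly R} by ring.
by apply/vanishN/vanishXn; apply: leq_trans (ltn_expl _ (isT : 1 < 3)%N).
Qed.

Lemma central_binom_sq (R : comNzRingType) N :
  teq N ((1 - 4%:R * 'X) * tpoly N central_binom ^+ 2) (1 : {poly R}).
Proof.
have := @vanish_map _ R intr _ _ (@cbinom_sq N).
by rewrite !(rmorphB, rmorphM, rmorphXn) rmorph1 rmorph_nat /= map_polyX tpoly_int.
Qed.

Lemma sgeom_inv (R : comNzRingType) N : teq N ((1 - 'X) * tpoly N sgeom) (1 : {poly R}).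
Proof.
move=> k hk; rewrite mulrBl mul1r !coefB coefXM coef1 tpoly_coef //.
case: k hk => [|k] hk /=; first by rewrite !subr0 subrr.
by rewrite tpoly_coef ?subrr ?subr0 //; apply: ltnW.
Qed.

Lemma smul_0 f g : smul f g 0 = f 0 * g 0.
Proof. by rewrite /smul big_ord1 subn0. Qed.

Lemma spow_0 f k : spow f k 0 = f 0 ^+ k.
Proof. by elim: k => [|k IH]; rewrite ?expr0 // /spow iterS smul_0 -/(spow f k) IH exprS. Qed.

Lemma Psi_neg_0 : Psi_neg 0 = 1.
Proof. by rewrite /Psi_neg big_ord1 coefB coef1 coefXn subr0. Qed.

Lemma rhs12_0 : rhs12 0 = 1.
Proof.
rewrite /rhs12 /ssub /sadd /sscale /sconst /sgeom /spoly !smul_0 !spow_0 Psi_neg_0 /=.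
by rewrite !coefE /= !expr1n; lia.
Qed.

Lemma tpoly_rhs12 (R : comNzRingType) N :
  teq N (tpoly N rhs12)
    ((9%:R * (1 + 'X) * tpoly N sgeom + 3%:R) * tpoly N Psi_neg
     - (4%:R * 'X + 8%:R) * tpoly N Psi_neg ^+ 3
     - (12%:R * 'X ^+ 2 + 12%:R * 'X + 3%:R) * tpoly N Psi_neg ^+ 5 : {poly R}).
Proof.
set G := tpoly N sgeom; set P := tpoly N Psi_neg.
have hmul f g : teq N (tpoly N (smul f g) : {poly R}) (tpoly N f * tpoly N g).
  exact: tpoly_smul.
have hpow k : teq N (tpoly N (spow Psi_neg k)) (P ^+ k) := tpoly_spow Psi_neg k.
have hpoly p (q : {poly R}) : map_poly intr p = q -> teq N (tpoly N (spoly p)) q.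
  by move=> <-; apply: tpoly_spoly.
have hA : teq N (tpoly N (sadd (sscale 9 (smul (spoly (1 + 'X)) sgeom)) (sconst 3)))
                (9%:R * (1 + 'X) * G + 3%:R).
  rewrite tpoly_sadd tpoly_sscale tpoly_sconst -!pmulrn !polyC_natr -mulrA.
  apply: teq_trans (teq_add (teq_mul (teq_refl _) (hmul _ _)) (teq_refl _)) _.
  teq_congr; apply: hpoly.
  by rewrite rmorphD rmorph1 /= map_polyX.
have hB : teq N (tpoly N (spoly (4 *: 'X + 8%:P))) (4%:R * 'X + 8%:R : {poly R}).
  apply: hpoly; rewrite !rmorphD /= !map_polyZ map_polyX map_polyC /=.
  by rewrite -!pmulrn scaler_nat mulr_natl polyC_natr.
have hC : teq N (tpoly N (spoly (12 *: 'X^2 + 12 *: 'X + 3%:P)))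
                (12%:R * 'X ^+ 2 + 12%:R * 'X + 3%:R : {poly R}).
  apply: hpoly; rewrite !rmorphD /= !map_polyZ map_polyXn map_polyX map_polyC /=.
  by rewrite -!pmulrn !scaler_nat !mulr_natl polyC_natr.
rewrite /rhs12 !tpoly_ssub; apply: teq_sub; first apply: teq_sub.
all: by apply: teq_trans (hmul _ _) _; teq_congr; exact: hpow.
Qed.

(* With w = 1-z, U = wG and V = wP^2 one has
   w^2 R = P * rhs_num z U V; the intended values are U = 1 and V = 1 + 3e. *)
Definition rhs_num (T : comNzRingType) (X U V : T) : T :=
  9%:R * (1 + X) * (1 - X) * U + 3%:R * (1 - X) ^+ 2
  - (4%:R * X + 8%:R) * (1 - X) * V - (12%:R * X ^+ 2 + 12%:R * X + 3%:R) * V ^+ 2.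

(* Put num = rhs_num X 1 (1+3e).  At
   e = 0, num = n0 = 1 - 14X - 14X^2 and (1-4X) n0^2 = (1-X)^5 + 27 q; in
   general num = n0 + 3e m with n0 + 2m = 9k and m = n0 + 3l, so every other
   contribution to (1-4X)(1+3e) num^2 is a multiple of 27. *)
Lemma rhs_num_mod27 (T : comNzRingType) (X e : T) : 27%:R = 0 :> T ->
  (1 - 4%:R * X) * (1 + 3%:R * e) * rhs_num X 1 (1 + 3%:R * e) ^+ 2 = (1 - X) ^+ 5.
Proof.
move=> h27.
pose C := 12%:R * X ^+ 2 + 12%:R * X + 3%:R.
pose n0 := 1 - 14%:R * X - 14%:R * X ^+ 2.
pose m := - (4%:R * X + 8%:R) * (1 - X) - C * (2%:R + 3%:R * e).
pose k := - 3%:R - 6%:R * X - 6%:R * X ^+ 2 - 2%:R * e * (2%:R * X + 1) ^+ 2.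
pose l := - 5%:R - 2%:R * X - 2%:R * X ^+ 2 - e * C.
pose q := - X + 10%:R * X ^+ 2 - 10%:R * X ^+ 3 - 51%:R * X ^+ 4 - 29%:R * X ^+ 5.
have -> : (1 - 4%:R * X) * (1 + 3%:R * e) * rhs_num X 1 (1 + 3%:R * e) ^+ 2 =
  (1 - X) ^+ 5 + 27%:R * (q + (1 - 4%:R * X) *
                          (e * n0 * k + e ^+ 2 * m * (n0 + l) + e ^+ 3 * m ^+ 2)).
  by rewrite /rhs_num /q /n0 /m /k /l /C; ring.
by rewrite h27 mul0r addr0.
Qed.

(* Modulo 27, the right-hand side is also a square root of 1/(1-4z):
   (1-z)^5 (1-4z) R^2 = (1-4z)(1+3e) num^2 = (1-z)^5, and (1-z)^5 cancels. *)
Lemma rhs12_sq (R : comUnitRingType) N : 27%:R = 0 :> R ->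
  teq N ((1 - 4%:R * 'X) * tpoly N rhs12 ^+ 2) (1 : {poly R}).
Proof.
move=> h27; set Rh := tpoly N rhs12; set w : {poly R} := 1 - 'X.
have := @tpoly_rhs12 R N; set G := tpoly N sgeom; set P := tpoly N Psi_neg => hR.
have hG : teq N (w * G) 1 by exact: sgeom_inv.
have [e hP] := @Psi_neg_sq R N; set V := 1 + 3%:R * e in hP; rewrite -/w -/P in hP.
have hwR : teq N (w ^+ 2 * Rh) (P * rhs_num 'X 1 V).
  apply: teq_trans (teq_mul (teq_refl (w ^+ 2)) hR) _.
  apply: teq_trans (teq_eq (_ : _ = P * rhs_num 'X (w * G) (w * P ^+ 2))) _.
    by rewrite /rhs_num /w; ring.
  by rewrite /rhs_num; teq_congr.
apply: (teq_cancel (u := w ^+ 5)).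
  by rewrite -horner_coef0 !hornerE subr0 expr1n unitr1.
have h27X : 27%:R = 0 :> {poly R} by rewrite -polyC_natr h27.
rewrite mulr1; apply: teq_trans _ (teq_eq (rhs_num_mod27 'X e h27X)); rewrite -/V.
apply: teq_trans (teq_eq (_ : _ = (1 - 4%:R * 'X) * w * (w ^+ 2 * Rh) ^+ 2)) _.
  by ring.
apply: teq_trans (teq_mul (teq_refl _) (teq_exp 2 hwR)) _.
apply: teq_trans (teq_eq (_ : _ = (1 - 4%:R * 'X) * (w * P ^+ 2) * rhs_num 'X 1 V ^+ 2)) _.
  by ring.
by teq_congr.
Qed.

(* Both series are normalized square roots of 1/(1-4z) in 'Z_27[[z]]; their
   constant terms add up to the unit 2, so they agree coefficientwise. *)
Theorem theorem12p2 : forall n : nat, (central_binom n = rhs12 n %[mod 27])%Z.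
Proof.
move=> n.
have h27 : 27%:R = 0 :> 'Z_27 by exact: pchar_Zp.
have hC : teq n ((1 - 4%:R * 'X) * tpoly n central_binom ^+ 2) (1 : {poly 'Z_27}).
  exact: central_binom_sq.
have hR := rhs12_sq (N := n) h27.
have hunit0 : (1 - 4%:R * 'X : {poly 'Z_27})`_0 \is a GRing.unit.
  by rewrite -horner_coef0 !hornerE subr0 unitr1.
have hunit2 : (tpoly n central_binom + tpoly n rhs12 : {poly 'Z_27})`_0 \is a GRing.unit.
  rewrite coefD (tpoly_coef central_binom (leq0n n)) (tpoly_coef rhs12 (leq0n n)).
  by rewrite rhs12_0 (_ : central_binom 0 = 1) // rmorph1 -(natrD _ 1 1) unitZpE.
have hCR := teq_sqrt_unique hunit0 hunit2 hC hR.
have := hCR n (leqnn n).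
rewrite coefB (tpoly_coef central_binom (leqnn n)) (tpoly_coef rhs12 (leqnn n)).
move=> /eqP; rewrite subr_eq0 => /eqP.
exact: Zp_intr_eqmod.
Qed.
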